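(* Each member of $\mathcal{G}_3$ is cycle-extendable.
   Context: A half biwheel is obtained from a path $P$ of even length (possibly a single vertex) with color classes $A,B$, whose ends $u,v$ lie in $A$, by adding a new vertex $h$ (the hub) adjacent to every vertex of $A$; $u,v$ are the corners (if $P$ is a single vertex the result is $K_2$ and $u=v$). $\mathcal{G}_3$ (hexagon half biwheels) consists of the graphs obtained from the disjoint union of a $6$-cycle $a_0a_1a_2a_3a_4a_5a_0$ and a half biwheel $H_1$ with hub $h_1$ and corners $u_1,v_1$ by adding the edges $h_1a_4$, $v_1a_1$, $a_3h_1$ and $a_0u_1$. A matching covered graph (connected, at least two vertices, every edge in a perfect matching) is cycle-extendable if for every even cycle $C$ the graph $G-V(C)$ has a perfect matching. *)

From mathcomp Require Import all_boot.
Set Implicit Arguments. Unset Strict Implicit. Unset Printing Implicit Defensive.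

(* A (simple) graph is given by its vertex type T : finType and an adjacency
   relation e : rel T (in_G3 below forces e to be symmetric and irreflexive). *)

Section Graphs.
Variable T : finType.
Variable e : rel T.

Definition perfect_matching_on (S : {set T}) (M : {set {set T}}) : bool :=
  [forall X in M, exists x, exists y,
      [&& X == [set x; y], x != y, x \in S, y \in S & e x y]]
  && [forall x in S, #|[set X in M | x \in X]| == 1].

Definition matching_covered : Prop :=
  [/\ 1 < #|T|,
      (forall x y : T, connect e x y) &
      (forall x y : T, e x y ->
         exists M, perfect_matching_on setT M /\ [set x; y] \in M)].

Definition even_cycle (s : seq T) : bool :=
  [&& uniq s, 2 < size s, cycle e s & ~~ odd (size s)].

Definition cycle_extendable : Prop :=
  matching_covered /\
  forall s : seq T, even_cycle s ->
    exists M, perfect_matching_on (~: [set x in s]) M.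

End Graphs.

(* The hexagon half biwheel with parameter k (path P of length 2k).
   Vertex numbering on 'I_(2k+8):
     0..5      = a_0 .. a_5 (the 6-cycle)
     6         = h_1 (hub)
     7 + i     = p_i, i = 0..2k, the path P = p_0 p_1 ... p_2k,
                 A = {p_i | i even}, u_1 = p_0, v_1 = p_2k. *)
Definition hexa_edge (k : nat) (x y : nat) : bool :=
  [|| (x < 6) && (y == (x + 1) %% 6),
      (x == 6) && (7 <= y) && ~~ odd (y - 7),
      (7 <= x) && (y == x + 1),
      (x == 6) && (y == 4),
      (x == 7 + 2 * k) && (y == 1),
      (x == 3) && (y == 6)
    | (x == 0) && (y == 7)].

Definition hexa (k : nat) : rel 'I_(2 * k + 8) :=
  fun x y => hexa_edge k x y || hexa_edge k y x.

Definition in_G3 (T : finType) (e : rel T) : Prop :=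
  exists k (f : 'I_(2 * k + 8) -> T),
    bijective f /\ forall x y, e (f x) (f y) = @hexa k x y.

From mathcomp Require Import all_boot zify.
Set Implicit Arguments. Unset Strict Implicit. Unset Printing Implicit Defensive.

Section MatchingMaps.
Variables (T : finType) (e : rel T).

(* A perfect matching of S presented as the fixed-point-free involution
   sending each vertex to its partner. *)
Definition matching_map_on (S : {set T}) (m : T -> T) :=
  forall x, x \in S -> [/\ m x \in S, m x != x, e x (m x) & m (m x) = x].

Lemma perfect_matching_of_map S m : matching_map_on S m ->
  exists M, perfect_matching_on e S M /\ forall x, x \in S -> [set x; m x] \in M.
Proof.
move=> mS; exists [set [set x; m x] | x in S]; split; last first.
  by move=> x xS; apply/imsetP; exists x.
apply/andP; split.
  apply/forallP => X; apply/implyP => /imsetP [x xS ->].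
  have [mxS mx_x exmx _] := mS x xS.
  by apply/existsP; exists x; apply/existsP; exists (m x); rewrite eqxx eq_sym mx_x xS mxS exmx.
apply/forallP => x; apply/implyP => xS; have [_ _ _ mmx] := mS x xS.
apply/eqP; rewrite (_ : [set X in _ | _] = [set [set x; m x]]) ?cards1 //.
apply/setP => X; rewrite !inE; apply/andP/eqP => [[/imsetP [y yS ->]]|->].
  have [_ _ _ mmy] := mS y yS.
  by rewrite !inE => /orP [/eqP ->|/eqP ->] //; rewrite mmy setUC.
by rewrite !inE eqxx; split => //; apply/imsetP; exists x.
Qed.

End MatchingMaps.

Section IsomorphismTransfer.
Variables (T T' : finType) (e : rel T) (e' : rel T') (f : T' -> T) (g : T -> T').
Hypotheses (fK : cancel f g) (gK : cancel g f) (f_hom : forall x y, e (f x) (f y) = e' x y).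

Lemma iso_edgeE x y : e x y = e' (g x) (g y).
Proof. by rewrite -f_hom !gK. Qed.

Lemma matching_map_on_iso (S' : {set T'}) (S : {set T}) m :
  (forall z, (z \in S) = (g z \in S')) -> matching_map_on e' S' m ->
  matching_map_on e S (f \o m \o g).
Proof.
move=> S_S' mS' z; rewrite S_S' => /mS' [mzS mz_z emz mmz] /=.
split; rewrite ?S_S' ?iso_edgeE ?fK ?mmz ?gK //.
by apply: contraNneq mz_z => /(congr1 g); rewrite fK => ->.
Qed.

Lemma cycle_extendable_iso : 1 < #|T'| ->
  (forall x y, connect e' x y) ->
  (forall x y, e' x y -> exists m, matching_map_on e' setT m /\ m x = y) ->
  (forall s, even_cycle e' s -> exists m, matching_map_on e' (~: [set x in s]) m) ->
  cycle_extendable e.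
Proof.
move=> card_T' conn' cov' ext'; have g_inj := can_inj gK.
split; first split.
- exact: leq_trans card_T' (leq_card _ (can_inj fK)).
- move=> x y; have /connectP [p p_path p_last] := conn' (g x) (g y).
  apply/connectP; exists (map f p); last by rewrite -[x in last x _]gK last_map -p_last gK.
  by rewrite -{1}(gK x) path_map; apply: sub_path p_path => a b /=; rewrite f_hom.
- move=> x y; rewrite iso_edgeE => /cov' [m [mT mxy]].
  have [|M [MT Mm]] := perfect_matching_of_map (matching_map_on_iso (S := setT) _ mT).
    by move=> z; rewrite !inE.
  by exists M; split => //; have := Mm x (in_setT x); rewrite /= mxy gK.
- move=> s /and4P [s_uniq s_size s_cycle s_even].
  have [|m ms] := ext' (map g s).
    apply/and4P; split; rewrite ?size_map ?map_inj_uniq //.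
    by rewrite cycle_map; apply: sub_cycle s_cycle => a b /=; rewrite iso_edgeE.
  have [|M [Ms _]] := perfect_matching_of_map (matching_map_on_iso (S := ~: [set x in s]) _ ms); last by exists M.
  by move=> z; rewrite !inE mem_map.
Qed.

End IsomorphismTransfer.

Lemma odd_count_changes (T : eqType) (f : T -> T) (c : T -> bool) x p y :
  fpath f x (rcons p y) -> odd (count (fun z => c z != c (f z)) (x :: p)) = (c x != c y).
Proof.
elim: p x => [|z p IHp] x /=; first by rewrite andbT => /eqP ->; case: (c x != c y).
case/andP => /eqP <- /IHp IH; rewrite -/(count _ (f x :: p)) oddD IH.
by case: (c x); case: (c (f x)); case: (c y).
Qed.

Section CycleAdjacency.
Variables (T : finType) (s : seq T).
Hypotheses (s_uniq : uniq s) (s_size : 2 < size s).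

Lemma cycle_next_closed (A : pred T) x y : x \in s -> y \in s ->
  (forall z, z \in s -> A z -> A (next s z)) -> A x -> A y.
Proof.
move=> xs ys A_next Ax.
have iter_in n : (iter n (next s) x \in s) && A (iter n (next s) x).
  by elim: n => [|n /andP [zs Az]] /=; rewrite ?xs ?Ax // mem_next zs A_next.
have /iter_findex <- : fconnect (next s) x y by rewrite (fconnect_cycle (cycle_next s_uniq) xs).
by case/andP: (iter_in (findex (next s) x y)).
Qed.

Lemma next_neq_prev x : x \in s -> next s x != prev s x.
Proof.
move=> xs; apply/negP => /eqP next_prev_x.
have back : next s (next s x) = x by rewrite next_prev_x next_prev.
have : {subset s <= [:: x; next s x]}.
  move=> y ys; apply: (cycle_next_closed (A := fun z => z \in [:: x; next s x]) xs ys).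
    by move=> z _; rewrite !inE => /orP [] /eqP ->; rewrite ?back eqxx ?orbT.
  by rewrite inE eqxx.
by move/(uniq_leq_size s_uniq); rewrite leqNgt s_size.
Qed.

Definition cycle_adj x y := (x \in s) && ((next s x == y) || (prev s x == y)).

Lemma cycle_adj_sym x y : cycle_adj x y = cycle_adj y x.
Proof.
wlog suff: x y / cycle_adj x y -> cycle_adj y x by move=> H; apply/idP/idP; apply: H.
case/andP => xs /orP [] /eqP <-; rewrite /cycle_adj ?mem_next ?mem_prev xs.
  by rewrite prev_next // eqxx orbT.
by rewrite next_prev // eqxx.
Qed.

Lemma cycle_adj_mem x y : cycle_adj x y -> (x \in s) && (y \in s).
Proof. by case/andP => xs /orP [] /eqP <-; rewrite ?mem_next ?mem_prev xs. Qed.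

Lemma cycle_adj_next x : x \in s -> cycle_adj x (next s x).
Proof. by move=> xs; rewrite /cycle_adj xs eqxx. Qed.

Lemma cycle_adj_prev x : x \in s -> cycle_adj x (prev s x).
Proof. by move=> xs; rewrite /cycle_adj xs eqxx orbT. Qed.

Lemma cycle_adj_other x a : x \in s -> exists2 y, cycle_adj x y & y != a.
Proof.
move=> xs; have := next_neq_prev xs; have [<-|] := eqVneq (next s x) a => [|na] np.
  by exists (prev s x); rewrite ?cycle_adj_prev // eq_sym.
by exists (next s x); rewrite ?cycle_adj_next.
Qed.

Lemma cycle_adj_third x a b c : cycle_adj x a -> cycle_adj x b -> a != b ->
  cycle_adj x c -> c = a \/ c = b.
Proof.
case/andP => _ /orP [] /eqP <- /andP [_ /orP [] /eqP <-] //; rewrite ?eqxx //= => _;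
  by case/andP => _ /orP [] /eqP ->; auto.
Qed.

Lemma cycle_crossing (P : pred T) x y : x \in s -> y \in s -> P x -> ~~ P y ->
  exists z, [/\ z \in s, P z & ~~ P (next s z)].
Proof.
move=> xs ys Px Py.
have [z /and3P [zs Pz Pnz]|stay] := pickP [pred z | [&& z \in s, P z & ~~ P (next s z)]].
  by exists z.
suff: P y by rewrite (negbTE Py).
apply: (cycle_next_closed xs ys) Px => z zs Pz.
by have := stay z; rewrite /= zs Pz /= => /negbFE.
Qed.

Lemma cycle_two_crossings (P : pred T) x y : x \in s -> y \in s -> P x -> ~~ P y ->
  exists z1 w1 z2 w2, [/\ cycle_adj z1 w1, cycle_adj z2 w2,
    [&& P z1, P z2, ~~ P w1 & ~~ P w2] & (z1 != z2) || (w1 != w2)].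
Proof.
move=> xs ys Px Py; have [z1 [z1s Pz1 Pw1]] := cycle_crossing xs ys Px Py.
have [|w2 [w2s Pw2 Pz2]] := cycle_crossing (P := predC P) ys xs Py; first by rewrite /= negbK.
exists z1, (next s z1), (next s w2), w2; split.
- exact: cycle_adj_next.
- by rewrite cycle_adj_sym cycle_adj_next.
- by move: Pw2 Pz2; rewrite /= negbK Pz1 Pw1 => -> ->.
rewrite -negb_and; apply/negP => /andP [/eqP z1E /eqP w1E]; have := next_neq_prev z1s.
by rewrite w1E z1E prev_next // eqxx.
Qed.

Lemma cycle_arc_count a b :
  count (fun z => (z == a) && (next s z == b)) s = (a \in s) && (next s a == b).
Proof.
rewrite (eq_count (a2 := fun z => (z == a) && (next s a == b))); last first.
  by move=> z; case: eqP => // ->.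
case: (next s a == b); last by rewrite (eq_count (a2 := pred0)) ?count_pred0 ?andbF // => z; rewrite andbF.
by rewrite andbT -(count_uniq_mem a s_uniq); apply: eq_count => z; rewrite andbT.
Qed.

Lemma cycle_adj_arcs a b :
  ((a \in s) && (next s a == b)) + ((b \in s) && (next s b == a)) = cycle_adj a b.
Proof.
have -> : (b \in s) && (next s b == a) = (a \in s) && (prev s a == b).
  apply/andP/andP => [[bs /eqP <-]|[as_ /eqP <-]].
    by rewrite mem_next prev_next ?eqxx.
  by rewrite mem_prev next_prev ?eqxx.
rewrite /cycle_adj; case: (boolP (a \in s)) => //= as_.
have := next_neq_prev as_.
by case: (next s a =P b) => [->|_]; case: (prev s a =P b) => [->|_]; rewrite ?eqxx.
Qed.

Lemma even_cycle_monochromatic (c : T -> bool) : ~~ odd (size s) ->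
  ~~ odd (count (fun z => c z == c (next s z)) s).
Proof.
have changes_even : ~~ odd (count (fun z => c z != c (next s z)) s).
  case def_s: s s_size => [|x p] // _.
  have := cycle_next s_uniq; rewrite [in cycle _ s]def_s => /odd_count_changes ->.
  by rewrite eqxx.
rewrite -(count_predC (fun z => c z == c (next s z))) oddD.
by move: changes_even => /negbTE /= ->; rewrite addbF.
Qed.

Lemma cycle_adj_monochromatic (c : T -> bool) a b a' b' :
  ~~ odd (size s) -> uniq [:: a; b; a'; b'] ->
  (forall z, z \in s -> (c z == c (next s z)) =
     [|| (z == a) && (next s z == b), (z == b) && (next s z == a),
         (z == a') && (next s z == b') | (z == b') && (next s z == a')]) ->
  cycle_adj a b = cycle_adj a' b'.
Proof.
move=> s_even abab' mono; have := even_cycle_monochromatic c s_even.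
have arcs_disj x y x' y' z : (x != x') || (y != y') ->
    ((z == x) && (next s z == y)) && ((z == x') && (next s z == y')) = false.
  apply: contraTF => /andP [/andP [/eqP <- /eqP <-] /andP [/eqP <- /eqP <-]].
  by rewrite !eqxx.
have count_or (A B : pred T) : (forall z, A z && B z = false) ->
    count (fun z => A z || B z) s = count A s + count B s.
  move=> AB; rewrite -count_predUI (eq_count (a1 := predI A B) (a2 := pred0)) ?count_pred0 ?addn0 // => z /=.
move: abab'; rewrite /= !inE !negb_or !andbT => /and3P [/and3P [ab aa' ab'] /andP [ba' bb'] a'b'].
rewrite (eq_in_count mono) !count_or ?addnA => [|z|z|z];
  rewrite ?andb_orr ?arcs_disj // ?(eq_sym b) ?ab ?aa' ?ab' ?ba' ?bb' ?a'b' ?orbT //.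
rewrite !cycle_arc_count -addnA !cycle_adj_arcs oddD.
by case: (cycle_adj a b); case: (cycle_adj a' b').
Qed.

Variable e : rel T.
Hypothesis s_cycle : cycle e s.

Lemma cycle_adj_edge x y : cycle_adj x y -> e x y || e y x.
Proof.
by case/andP => xs /orP [] /eqP <-; rewrite ?(next_cycle s_cycle) ?(prev_cycle s_cycle) ?orbT.
Qed.

Lemma cycle_adj_forced x a b : x \in s -> a != b ->
  (forall y, e x y || e y x -> y \in s -> y = a \/ y = b) ->
  cycle_adj x a /\ cycle_adj x b.
Proof.
move=> xs ab nbr.
have [na|na] := nbr _ (cycle_adj_edge (cycle_adj_next xs)) (etrans (mem_next _ _) xs);
have [pa|pa] := nbr _ (cycle_adj_edge (cycle_adj_prev xs)) (etrans (mem_prev _ _) xs);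
  have := next_neq_prev xs; rewrite ?na ?pa ?eqxx // => _;
  by rewrite /cycle_adj xs na pa !eqxx ?orbT.
Qed.

End CycleAdjacency.

Fixpoint swap_pairs (T : eqType) (ps : seq (T * T)) x :=
  if ps is (a, b) :: ps' then (if x == a then b else if x == b then a else swap_pairs ps' x)
  else x.

Definition pair_support (T : eqType) (ps : seq (T * T)) := flatten [seq [:: p.1; p.2] | p <- ps].

Lemma swap_pairs_spec (T : eqType) (ps : seq (T * T)) x :
  uniq (pair_support ps) -> x \in pair_support ps ->
  [/\ swap_pairs ps x \in pair_support ps, swap_pairs ps x != x,
      (x, swap_pairs ps x) \in ps \/ (swap_pairs ps x, x) \in ps
    & swap_pairs ps (swap_pairs ps x) = x].
Proof.
elim: ps => [|[a b] ps IHps] //= /and3P [a_notin b_ps ps_uniq].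
rewrite inE negb_or in a_notin; case/andP: a_notin => ab a_ps.
have ba : (b == a) = false by rewrite eq_sym (negbTE ab).
case: (eqVneq x a) => [-> _|xa].
  by rewrite /= ba eqxx !inE !eqxx orbT; split; auto.
case: (eqVneq x b) => [-> _|xb].
  by rewrite /= eqxx !inE !eqxx ?orbT; split; auto.
rewrite /= !inE (negbTE xa) (negbTE xb) /= => x_ps.
have [swap_ps swap_x ps_x swap_swap] := IHps ps_uniq x_ps.
have swap_a : swap_pairs ps x != a by apply: contraNneq a_ps => <-.
have swap_b : swap_pairs ps x != b by apply: contraNneq b_ps => <-.
rewrite (negbTE swap_a) (negbTE swap_b) swap_swap swap_ps !orbT.
by split => //; case: ps_x => ->; rewrite orbT; auto.
Qed.

Ltac no_if c := lazymatch c with context[if _ then _ else _] => fail | _ => idtac end.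

Ltac split_ifs := repeat match goal with |- context[if ?c then _ else _] => no_if c;
  first [ rewrite (_ : c = true); [|lia] | rewrite (_ : c = false); [|lia]
        | case: (boolP c) => ? ] end.

Section HexaGraph.
Variable k : nat.
Local Notation N := (2 * k + 8).

Lemma N_gt0 : 0 < N. Proof. by rewrite addnS. Qed.

(* Vertices are handled as natural numbers; [vtx] reads them back in ['I_N]. *)
Definition vtx (x : nat) : 'I_N := Ordinal (ltn_pmod x N_gt0).

Lemma vtxE x : x < N -> vtx x = x :> nat.
Proof. exact: modn_small. Qed.

Lemma vtxK (x : 'I_N) : vtx x = x.
Proof. by apply: ord_inj; apply: vtxE. Qed.

Lemma vtx_eq x y : x < N -> y < N -> (vtx x == vtx y) = (x == y).
Proof. by move=> xN yN; apply/eqP/eqP => [/(congr1 (@nat_of_ord _))|->]; rewrite ?vtxE. Qed.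

Lemma eq_vtx (z : 'I_N) x : x < N -> (z == vtx x) = (z == x :> nat).
Proof. by move=> xN; rewrite -{1}(vtxK z) vtx_eq. Qed.

Definition hexa_adj x y := hexa_edge k x y || hexa_edge k y x.

Lemma hexa_adj_sym x y : hexa_adj x y = hexa_adj y x.
Proof. exact: orbC. Qed.

Lemma hexa_vtx x y : x < N -> y < N -> hexa (vtx x) (vtx y) = hexa_adj x y.
Proof. by move=> xN yN; rewrite /hexa !vtxE. Qed.

Lemma hexagon_succE x y :
  (x < 6) && (y == (x + 1) %% 6) = (x < 5) && (y == x + 1) || (x == 5) && (y == 0).
Proof. by do 6?[case: x => [|x] //]; rewrite orbF. Qed.

(* [hexa_edge] without the modulus, so that [lia] handles it quickly. *)
Definition hexa_arc x y : Prop :=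
  (x < 5 /\ y = x.+1) \/ (x = 5 /\ y = 0) \/ (x = 6 /\ 7 <= y /\ ~~ odd (y - 7)) \/
  (7 <= x /\ y = x.+1) \/ (x = 6 /\ y = 4) \/ (x = 7 + 2 * k /\ y = 1) \/
  (x = 3 /\ y = 6) \/ (x = 0 /\ y = 7).

Lemma hexa_edge_arc x y : hexa_edge k x y <-> hexa_arc x y.
Proof.
rewrite /hexa_edge hexagon_succE addn1 /hexa_arc; split.
  case/or4P => [/orP [/andP [? /eqP ->]|/andP [/eqP -> /eqP ->]]|/andP [/andP [/eqP -> ?] ?]|
    /andP [? /eqP ->]|/or4P [] /andP [] /eqP -> /eqP ->]; tauto.
by move=> H; apply/orP; lia.
Qed.

Lemma hexa_adjP x y : hexa_adj x y <-> hexa_arc x y \/ hexa_arc y x.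
Proof. by rewrite /hexa_adj -!hexa_edge_arc; split => [/orP|[] ->]; rewrite ?orbT. Qed.

Lemma a0_nbr y : hexa_adj 0 y -> y = 1 \/ y = 5 \/ y = 7.
Proof. by move/hexa_adjP; rewrite /hexa_arc; lia. Qed.

Lemma a1_nbr y : hexa_adj 1 y -> y = 0 \/ y = 2 \/ y = 7 + 2 * k.
Proof. by move/hexa_adjP; rewrite /hexa_arc; lia. Qed.

Lemma a2_nbr y : hexa_adj 2 y -> y = 1 \/ y = 3.
Proof. by move/hexa_adjP; rewrite /hexa_arc; lia. Qed.

Lemma a3_nbr y : hexa_adj 3 y -> y = 2 \/ y = 4 \/ y = 6.
Proof. by move/hexa_adjP; rewrite /hexa_arc; lia. Qed.

Lemma a4_nbr y : hexa_adj 4 y -> y = 3 \/ y = 5 \/ y = 6.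
Proof. by move/hexa_adjP; rewrite /hexa_arc; lia. Qed.

Lemma a5_nbr y : hexa_adj 5 y -> y = 4 \/ y = 0.
Proof. by move/hexa_adjP; rewrite /hexa_arc; lia. Qed.

Lemma hub_nbr y : hexa_adj 6 y -> y = 3 \/ y = 4 \/ 7 <= y /\ ~~ odd (y - 7).
Proof. by move/hexa_adjP; rewrite /hexa_arc; lia. Qed.

Lemma path_nbr t y : hexa_adj (7 + t) y ->
  y = 8 + t \/ y = 6 + t /\ 0 < t \/ y = 6 /\ ~~ odd t \/ y = 0 /\ t = 0 \/ y = 1 /\ t = 2 * k.
Proof. by move/hexa_adjP; rewrite /hexa_arc; lia. Qed.

Lemma left_segment_exit c z w : c <= 2 * k -> hexa_adj z w -> 7 <= z < 7 + c ->
  ~~ (7 <= w < 7 + c) -> w != 7 + c -> (z = 7 /\ w = 0) \/ w = 6.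
Proof.
move=> ck zw z_left; have z7 : 7 <= z by lia.
by have := @path_nbr (z - 7) w; rewrite subnKC // => /(_ zw); lia.
Qed.

Lemma right_segment_exit c z w : hexa_adj z w -> z < N -> 7 + c < z ->
  ~~ (7 + c < w) -> w != 7 + c -> (z = 7 + 2 * k /\ w = 1) \/ w = 6.
Proof.
move=> zw zN z_right; have z7 : 7 <= z by lia.
by have := @path_nbr (z - 7) w; rewrite subnKC // => /(_ zw); lia.
Qed.

Definition matching_fun_off (C : pred nat) (F : nat -> nat) :=
  forall x, x < N -> ~~ C x -> [/\ F x < N, ~~ C (F x), F x != x, hexa_adj x (F x) & F (F x) = x].

Definition matchable_off (C : pred nat) := exists F, matching_fun_off C F.

Lemma matchable_off_eq C C' : (forall x, x < N -> C x = C' x) ->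
  matchable_off C' -> matchable_off C.
Proof.
move=> CC' [F FC']; exists F => x xN Cx.
have [|FxN C'Fx ? ? ?] := FC' x xN; first by rewrite -CC'.
by split; rewrite // CC'.
Qed.

Lemma matching_map_of_fun C F : matching_fun_off C F ->
  matching_map_on (@hexa k) [set x : 'I_N | ~~ C x] (fun x => vtx (F x)).
Proof.
move=> FC x; rewrite inE => /(FC _ (ltn_ord x)) [FxN CFx Fx_x adj_xFx FFx].
have vtxFx : vtx (F x) = F x :> nat by rewrite vtxE.
split.
- by rewrite inE vtxFx.
- by apply: contraNneq Fx_x => Fx_eq; rewrite -vtxFx Fx_eq.
- by rewrite -{1}(vtxK x) hexa_vtx.
- by rewrite vtxFx FFx vtxK.
Qed.

Definition path_matching (ps : seq (nat * nat)) (i j : nat) x :=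
  if (x < 7) || (7 + i <= x <= 7 + j) then swap_pairs ps x
  else if x < 7 + i then (if odd (x - 7) then x.-1 else x.+1)
  else if odd (x - 7) then x.+1 else x.-1.

Lemma path_arc_adj x : 7 <= x -> hexa_adj x x.+1.
Proof. by move=> x7; apply/hexa_adjP; left; do 3 right; left. Qed.

Lemma path_pred_adj x : 7 < x -> hexa_adj x x.-1.
Proof. by case: x => // x x7; rewrite hexa_adj_sym path_arc_adj. Qed.

Lemma path_matching_off C ps i j : ~~ odd i -> ~~ odd j -> i <= j <= 2 * k ->
  (forall x, 7 <= x < N -> ~~ ((x < 7) || (7 + i <= x <= 7 + j)) -> ~~ C x) ->
  uniq (pair_support ps) -> (forall a b, (a, b) \in ps -> hexa_adj a b) ->
  (forall x, (x \in pair_support ps) = [&& x < N, ~~ C x & (x < 7) || (7 + i <= x <= 7 + j)]) ->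
  matching_fun_off C (path_matching ps i j).
Proof.
move=> i_even j_even ijk path_off ps_uniq ps_adj ps_support x xN Cx.
rewrite /path_matching; case: ifP => [x_core|x_path].
  have x_ps : x \in pair_support ps by rewrite ps_support xN Cx x_core.
  have [swap_ps swap_x ps_x swap_swap] := swap_pairs_spec ps_uniq x_ps.
  move: (swap_ps); rewrite ps_support => /and3P [swapN swapC swap_core].
  rewrite swap_core swap_swap; split => //.
  by case: ps_x => /ps_adj; rewrite // hexa_adj_sym.
have x7 : 7 <= x by move: x_path; lia.
by split_ifs; split; try lia; match goal with
  | |- is_true (~~ C _) => apply: path_off; lia
  | |- is_true (hexa_adj _ _.+1) => apply: path_arc_adj; lia
  | |- is_true (hexa_adj _ _.-1) => apply: path_pred_adj; lia end.
Qed.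

Definition hexagon_pairs (b : bool) :=
  if b then [:: (0, 1); (2, 3); (4, 5)] else [:: (1, 2); (3, 4); (5, 0)].

Ltac disj_lia := lazymatch goal with
  | |- _ \/ _ => first [left; disj_lia | right; disj_lia]
  | _ => lia end.

Ltac solve_path_matching := apply: path_matching_off; [lia | lia | lia
  | move=> x xN; rewrite /=; lia
  | by rewrite /= ?inE; lia
  | move=> a b; rewrite !inE; (repeat case/orP); case/eqP => -> ->;
    apply/hexa_adjP; rewrite /hexa_arc; disj_lia
  | move=> x; rewrite /= ?inE /=; apply/idP/idP; lia ].

Lemma spoke_matching b j : ~~ odd j -> j <= 2 * k ->
  matching_fun_off pred0 (path_matching ((6, 7 + j) :: hexagon_pairs b) j j).
Proof. by move=> j_even jk; case: b; solve_path_matching. Qed.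

Lemma a0u1_matching :
  matching_fun_off pred0 (path_matching [:: (0, 7); (3, 6); (1, 2); (4, 5)] 0 0).
Proof. by solve_path_matching. Qed.

Lemma a1v1_matching :
  matching_fun_off pred0 (path_matching [:: (1, 7 + 2 * k); (4, 6); (0, 5); (2, 3)] (2 * k) (2 * k)).
Proof. by solve_path_matching. Qed.

Lemma arc_in_matching x y : hexa_arc x y -> x < N -> y < N -> exists F, matching_fun_off pred0 F /\ F x = y.
Proof.
rewrite /hexa_arc; case=> [[x5 ->]|[[-> ->]|[[-> [y7 y_even]]|[[x7 ->]|[[-> ->]|[[-> ->]|[[-> ->]|[-> ->]]]]]]]] xN yN.
- exists (path_matching ((6, 7) :: hexagon_pairs (~~ odd x)) 0 0); split; first exact: spoke_matching.
  by case: x {xN yN} x5 => [|[|[|[|[|]]]]].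
- exists (path_matching ((6, 7) :: hexagon_pairs false) 0 0); split; first exact: spoke_matching.
  by [].
- exists (path_matching ((6, y) :: hexagon_pairs true) (y - 7) (y - 7)); split.
    by rewrite -[in (6, y)](subnKC y7); apply: spoke_matching; lia.
  by [].
- have [x_odd|x_even] := boolP (odd (x - 7)).
    exists (path_matching ((6, 7) :: hexagon_pairs true) 0 0); split; first exact: spoke_matching.
    by rewrite /path_matching; split_ifs.
  exists (path_matching ((6, 7 + 2 * k) :: hexagon_pairs true) (2 * k) (2 * k)); split.
    by apply: spoke_matching; lia.
  by rewrite /path_matching; split_ifs.
- by exists (path_matching [:: (1, 7 + 2 * k); (4, 6); (0, 5); (2, 3)] (2 * k) (2 * k)); split;
    [exact: a1v1_matching | rewrite /path_matching /=; split_ifs].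
- by exists (path_matching [:: (1, 7 + 2 * k); (4, 6); (0, 5); (2, 3)] (2 * k) (2 * k)); split;
    [exact: a1v1_matching | rewrite /path_matching /=; split_ifs].
- by exists (path_matching [:: (0, 7); (3, 6); (1, 2); (4, 5)] 0 0); split; [exact: a0u1_matching|].
- by exists (path_matching [:: (0, 7); (3, 6); (1, 2); (4, 5)] 0 0); split; [exact: a0u1_matching|].
Qed.


Lemma hexa_edge_in_matching (x y : 'I_N) : hexa x y ->
  exists m, matching_map_on (@hexa k) setT m /\ m x = y.
Proof.
rewrite -{1}(vtxK x) -{1}(vtxK y) hexa_vtx // => /hexa_adjP xy.
have [F [FM Fxy]] : exists F, matching_fun_off pred0 F /\ F x = y.
  case: xy => [/arc_in_matching|/arc_in_matching yx]; first exact.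
  have [F [FM Fyx]] := yx (ltn_ord y) (ltn_ord x).
  by exists F; split => //; have [_ _ _ _ <-] := FM y (ltn_ord y) isT; rewrite Fyx.
exists (fun z : 'I_N => vtx (F z)); split.
  by have := matching_map_of_fun FM; rewrite (_ : [set _ | _] = setT) // -setTE.
by apply: ord_inj; rewrite Fxy vtxE.
Qed.

Lemma hexa_connect_hub x : x < N -> connect (@hexa k) (vtx x) (vtx 6).
Proof.
have step y z : hexa_arc y z \/ hexa_arc z y -> y < N -> z < N ->
    connect (@hexa k) (vtx z) (vtx 6) -> connect (@hexa k) (vtx y) (vtx 6).
  by move=> /hexa_adjP yz yN zN; apply: connect_trans; apply: connect1; rewrite hexa_vtx.
have c4 : connect (@hexa k) (vtx 4) (vtx 6).
  by apply: (step _ 6) (connect0 _ _); [rewrite /hexa_arc; disj_lia | lia..].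
have c3 : connect (@hexa k) (vtx 3) (vtx 6).
  by apply: (step _ 6) (connect0 _ _); [rewrite /hexa_arc; disj_lia | lia..].
have c5 : connect (@hexa k) (vtx 5) (vtx 6).
  by apply: (step _ 4) c4; [rewrite /hexa_arc; disj_lia | lia..].
have c2 : connect (@hexa k) (vtx 2) (vtx 6).
  by apply: (step _ 3) c3; [rewrite /hexa_arc; disj_lia | lia..].
have c0 : connect (@hexa k) (vtx 0) (vtx 6).
  by apply: (step _ 5) c5; [rewrite /hexa_arc; disj_lia | lia..].
have c1 : connect (@hexa k) (vtx 1) (vtx 6).
  by apply: (step _ 0) c0; [rewrite /hexa_arc; disj_lia | lia..].
move=> xN; have [x7|x7] := ltnP x 7.
  by case: x x7 xN => [|[|[|[|[|[|[|]]]]]]].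
have spoke y : 7 <= y < N -> ~~ odd (y - 7) -> connect (@hexa k) (vtx y) (vtx 6).
  by move=> yN y_even; apply: (step _ 6) (connect0 _ _); [rewrite /hexa_arc; disj_lia | lia..].
have [x_odd|x_even] := boolP (odd (x - 7)); last by apply: spoke; lia.
by apply: (step _ x.+1) (spoke _ _ _); [rewrite /hexa_arc; disj_lia | lia..].
Qed.

Lemma hexa_connected (x y : 'I_N) : connect (@hexa k) x y.
Proof.
have hexa_sym : connect_sym (@hexa k) by apply: sym_connect_sym => a b; rewrite /hexa orbC.
rewrite -(vtxK x) -(vtxK y); apply: connect_trans (hexa_connect_hub (ltn_ord x)) _.
by rewrite hexa_sym; apply: hexa_connect_hub.
Qed.


Lemma matchable_hexagon : matchable_off (fun x => x < 6).
Proof. by exists (path_matching [:: (6, 7)] 0 0); solve_path_matching. Qed.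

Lemma matchable_hub_path i j : ~~ odd i -> ~~ odd j -> i <= j <= 2 * k ->
  matchable_off (fun x => (x == 6) || (7 + i <= x <= 7 + j)).
Proof. by exists (path_matching (hexagon_pairs true) i j); solve_path_matching. Qed.

Lemma matchable_arc03 j : ~~ odd j -> j <= 2 * k ->
  matchable_off (fun x => (x < 4) || (x == 6) || (7 <= x <= 7 + j)).
Proof. by exists (path_matching [:: (4, 5)] 0 j); solve_path_matching. Qed.

Lemma matchable_arc30 j : ~~ odd j -> j <= 2 * k ->
  matchable_off (fun x => (x == 0) || (3 <= x <= 6) || (7 <= x <= 7 + j)).
Proof. by exists (path_matching [:: (1, 2)] 0 j); solve_path_matching. Qed.

Lemma matchable_arc14 i : ~~ odd i -> i <= 2 * k ->
  matchable_off (fun x => (1 <= x <= 4) || (x == 6) || (7 + i <= x)).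
Proof. by exists (path_matching [:: (0, 5)] i (2 * k)); solve_path_matching. Qed.

Lemma matchable_arc41 i : ~~ odd i -> i <= 2 * k ->
  matchable_off (fun x => (x <= 1) || (4 <= x <= 6) || (7 + i <= x)).
Proof. by exists (path_matching [:: (2, 3)] i (2 * k)); solve_path_matching. Qed.

Lemma matchable_all : matchable_off (fun _ => true).
Proof. by exists id. Qed.

End HexaGraph.

Section HexaCycle.
Variables (k : nat) (s : seq 'I_(2 * k + 8)).
Local Notation N := (2 * k + 8).
Local Notation vtx := (vtx k).
Local Notation hexa_adj := (hexa_adj k).
Hypotheses (s_uniq : uniq s) (s_size : 2 < size s) (s_cycle : cycle (@hexa k) s).
Hypothesis s_even : ~~ odd (size s).

Definition on_cycle x := (x < N) && (vtx x \in s).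
Definition cadj x y := [&& x < N, y < N & cycle_adj s (vtx x) (vtx y)].

Lemma on_cycle_lt x : on_cycle x -> x < N.
Proof. by case/andP. Qed.

Lemma on_cycleE (z : 'I_N) : on_cycle z = (z \in s).
Proof. by rewrite /on_cycle ltn_ord vtxK. Qed.

Lemma cadjE (z w : 'I_N) : cadj z w = cycle_adj s z w.
Proof. by rewrite /cadj !ltn_ord !vtxK. Qed.

Lemma cadj_sym x y : cadj x y = cadj y x.
Proof. by rewrite /cadj cycle_adj_sym // andbCA. Qed.

Lemma cadj_on x y : cadj x y -> on_cycle x && on_cycle y.
Proof. by case/and3P => xN yN /(cycle_adj_mem) /andP [xs ys]; rewrite /on_cycle xN yN xs ys. Qed.

Lemma cadj_hexa x y : cadj x y -> hexa_adj x y.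
Proof.
case/and3P => xN yN /(cycle_adj_edge s_cycle); rewrite -hexa_vtx //.
by case/orP => //; rewrite /hexa orbC.
Qed.

Lemma cadj_two x : on_cycle x -> exists n p, [/\ cadj x n, cadj x p & n != p].
Proof.
case/andP => xN xs; rewrite -(vtxE xN).
exists (next s (vtx x)), (prev s (vtx x)).
by rewrite !cadjE cycle_adj_next ?cycle_adj_prev // val_eqE next_neq_prev.
Qed.

Lemma cadj_other x a : on_cycle x -> exists2 y, cadj x y & y != a.
Proof.
case/cadj_two => n [p [xn xp np]]; have [na|] := eqVneq n a; last by exists n.
by exists p; rewrite // -na eq_sym.
Qed.

Lemma cadj_third x a b c : cadj x a -> cadj x b -> a != b -> cadj x c -> c = a \/ c = b.
Proof.
case/and3P => xN aN xa /and3P [_ bN xb] ab /and3P [_ cN xc].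
have := cycle_adj_third xa xb _ xc; rewrite !vtx_eq //.
by case/(_ ab) => /eqP; rewrite vtx_eq // => /eqP; auto.
Qed.

Lemma cadj_forced x a b : on_cycle x -> a != b ->
  (forall y, hexa_adj x y -> on_cycle y -> y = a \/ y = b) -> cadj x a /\ cadj x b.
Proof.
move=> /cadj_two [n [p [xn xp np]]] ab nbr.
have [/andP [_ nC] /andP [_ pC]] := (cadj_on xn, cadj_on xp).
case: (nbr n (cadj_hexa xn) nC) => na; case: (nbr p (cadj_hexa xp) pC) => pb;
  subst; rewrite ?eqxx // in np; tauto.
Qed.

Lemma cycle_two_crossings_nat (P : pred nat) x y : on_cycle x -> on_cycle y -> P x -> ~~ P y ->
  exists z1 w1 z2 w2, [/\ cadj z1 w1, cadj z2 w2,
    [&& P z1, P z2, ~~ P w1 & ~~ P w2] & (z1 != z2) || (w1 != w2)].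
Proof.
case/andP => xN xs /andP [yN ys] Px Py.
have [] := cycle_two_crossings s_uniq s_size (P := fun z : 'I_N => P z) xs ys; rewrite ?vtxE //.
move=> z1 [w1 [z2 [w2 [z1w1 z2w2 Pzw zw]]]].
by exists z1, w1, z2, w2; rewrite !cadjE !val_eqE.
Qed.

Lemma cycle_crossing_nat (P : pred nat) x y : on_cycle x -> on_cycle y -> P x -> ~~ P y ->
  exists z w, [/\ cadj z w, P z & ~~ P w].
Proof.
move=> xC yC Px Py; have [z1 [w1 [_ [_ [zw _ /and4P [Pz _ Pw _] _]]]]] :=
  cycle_two_crossings_nat xC yC Px Py.
by exists z1, w1.
Qed.

Lemma cadj_parity (c : nat -> bool) a b a' b' : uniq [:: a; b; a'; b'] ->
  all (fun x => x < N) [:: a; b; a'; b'] ->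
  (forall x y, hexa_adj x y -> (c x == c y) =
     [|| (x == a) && (y == b), (x == b) && (y == a), (x == a') && (y == b') | (x == b') && (y == a')]) ->
  cadj a b = cadj a' b'.
Proof.
move=> abab' /and5P [aN bN a'N b'N _] mono; rewrite /cadj aN bN a'N b'N /=.
apply: (@cycle_adj_monochromatic _ _ s_uniq s_size (fun z : 'I_N => c z)) => //.
  by move: abab'; rewrite /= !inE !vtx_eq.
move=> z zs; rewrite mono ?eq_vtx //.
by have := cycle_adj_next zs; rewrite -cadjE => /cadj_hexa.
Qed.

(* Colouring a_i by the parity of i, the hub by 1 and p_t by the parity of t
   leaves exactly the edges a_3 h_1 and a_0 u_1 monochromatic. *)
Definition colour_a3 x := if x < 6 then odd x else if x == 6 then true else odd (x - 7).
Definition colour_a4 x := if x < 6 then odd x else if x == 6 then false else ~~ odd (x - 7).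

Lemma colour_a3_mono x y : hexa_adj x y -> (colour_a3 x == colour_a3 y) =
  [|| (x == 6) && (y == 3), (x == 3) && (y == 6), (x == 0) && (y == 7) | (x == 7) && (y == 0)].
Proof.
case/hexa_adjP; rewrite /hexa_arc /colour_a3 => arc; split_ifs; apply/idP/idP; lia.
Qed.


Lemma colour_a4_mono x y : hexa_adj x y -> (colour_a4 x == colour_a4 y) =
  [|| (x == 6) && (y == 4), (x == 4) && (y == 6), (x == 1) && (y == 7 + 2 * k)
    | (x == 7 + 2 * k) && (y == 1)].
Proof.
case/hexa_adjP; rewrite /hexa_arc /colour_a4 => arc; split_ifs; apply/idP/idP; lia.
Qed.

Lemma a3_hub_parity : cadj 6 3 = cadj 0 7.
Proof. by apply: (cadj_parity (c := colour_a3)) colour_a3_mono => //=; lia. Qed.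

Lemma a4_hub_parity : cadj 6 4 = cadj 1 (7 + 2 * k).
Proof.
by apply: (cadj_parity (c := colour_a4)) colour_a4_mono; rewrite /= ?inE; lia.
Qed.

Lemma odd_path_cadj t : odd t -> on_cycle (7 + t) -> cadj (7 + t) (6 + t) /\ cadj (7 + t) (8 + t).
Proof.
move=> t_odd tC; apply: cadj_forced => //; first lia.
by move=> y /path_nbr; lia.
Qed.

Lemma hub_crossings (P : pred nat) p q x y : on_cycle x -> on_cycle y -> P x -> ~~ P y ->
  (forall z w, cadj z w -> P z -> ~~ P w -> (z = p /\ w = q) \/ w = 6) ->
  exists z, [/\ P z, cadj 6 z & cadj p q \/ exists z', [/\ P z', cadj 6 z' & z' != z]].
Proof.
move=> xC yC Px Py exits.
have [z1 [w1 [z2 [w2 [zw1 zw2 /and4P [Pz1 Pz2 Pw1 Pw2] zw_neq]]]]] :=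
  cycle_two_crossings_nat xC yC Px Py.
have hub_side z w : cadj z w -> w = 6 -> cadj 6 z by move=> + w6; rewrite w6 cadj_sym.
case: (exits _ _ zw1 Pz1 Pw1) => [[z1p w1q]|w1_hub];
  case: (exits _ _ zw2 Pz2 Pw2) => [[z2p w2q]|w2_hub].
- by move: zw_neq; rewrite z1p z2p w1q w2q !eqxx.
- by exists z2; split; [|exact: hub_side zw2 w2_hub|left; rewrite -z1p -w1q].
- by exists z1; split; [|exact: hub_side zw1 w1_hub|left; rewrite -z2p -w2q].
- exists z1; split; [|exact: hub_side zw1 w1_hub|right; exists z2; split] => //.
    exact: hub_side zw2 w2_hub.
  by move: zw_neq; rewrite w1_hub w2_hub eqxx orbF eq_sym.
Qed.

Lemma path_gap_free a c b : a < c < b -> on_cycle (7 + a) -> on_cycle (7 + b) ->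
  ~~ on_cycle (7 + c) -> False.
Proof.
move=> acb aC bC cC; have bN := on_cycle_lt bC.
have off_c w : on_cycle w -> w != 7 + c by apply: contraTneq => ->.
have [zL [zL_left hub_zL left_exit]] :
    exists z, [/\ 7 <= z < 7 + c, cadj 6 z & cadj 7 0 \/ exists z', [/\ 7 <= z' < 7 + c, cadj 6 z' & z' != z]].
  apply: (hub_crossings (P := fun z => 7 <= z < 7 + c) aC bC) => [||z w zw]; try lia.
  have /andP [_ wC] := cadj_on zw.
  by move=> z_left w_left; apply: (left_segment_exit _ (cadj_hexa zw) z_left w_left (off_c w wC)); lia.
have [zR [zR_right hub_zR _]] : exists z, [/\ 7 + c < z, cadj 6 z &
    cadj (7 + 2 * k) 1 \/ exists z', [/\ 7 + c < z', cadj 6 z' & z' != z]].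
  apply: (hub_crossings (P := fun z => 7 + c < z) (p := 7 + 2 * k) (q := 1) bC aC) => [||z w zw]; try lia.
  have /andP [zC wC] := cadj_on zw.
  by move=> z_right w_right; apply: right_segment_exit (cadj_hexa zw) (on_cycle_lt zC) z_right w_right (off_c w wC).
have zLR : zL != zR by lia.
have only_two y : cadj 6 y -> y = zL \/ y = zR := cadj_third hub_zL hub_zR zLR.
have a0u1 : cadj 0 7.
  case: left_exit => [|[z' [z'_left /only_two]]]; first by rewrite cadj_sym.
  by lia.
by move: a0u1; rewrite -a3_hub_parity => /only_two; lia.
Qed.

Lemma path_trace t0 : on_cycle (7 + t0) -> exists i j,
  [/\ ~~ odd i, ~~ odd j, i <= j <= 2 * k & forall t, on_cycle (7 + t) = (i <= t <= j)].
Proof.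
move=> t0C; have trace_ex : exists t, on_cycle (7 + t) by exists t0.
have trace_le t : on_cycle (7 + t) -> t <= 2 * k by move/on_cycle_lt; lia.
have [i iC i_min] := ex_minnP trace_ex; have [j jC j_max] := ex_maxnP trace_ex trace_le.
have ij : i <= j := i_min j jC.
have trace t : on_cycle (7 + t) = (i <= t <= j).
  apply/idP/idP => [tC|/andP [it tj]]; first by rewrite i_min ?j_max.
  apply/negPn/negP => tC.
  have [ti tj'] : t != i /\ t != j by split; apply: contraNneq tC => ->.
  by apply: (path_gap_free (a := i) (c := t) (b := j)) => //; lia.
exists i, j; split => //; last by rewrite ij trace_le.
- apply/negP => i_odd; have [/cadj_on /andP [_] ] := odd_path_cadj i_odd iC.
  by rewrite (_ : 6 + i = 7 + i.-1) ?trace; lia.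
- apply/negP => j_odd; have [_ /cadj_on /andP [_] ] := odd_path_cadj j_odd jC.
  by rewrite (_ : 8 + j = 7 + j.+1) ?trace; lia.
Qed.

Lemma lonely_off x a : (forall y, cadj x y -> y = a) -> ~~ on_cycle x.
Proof.
by move=> only_a; apply/negP => /(cadj_other a) [y /only_a ->]; rewrite eqxx.
Qed.

Lemma on_cycle_forced x a b : on_cycle x -> a != b ->
  (forall y, hexa_adj x y -> on_cycle y -> y = a \/ y = b) -> on_cycle a && on_cycle b.
Proof.
by move=> xC ab /(cadj_forced xC ab) [/cadj_on /andP [_ ->] /cadj_on /andP [_ ->]].
Qed.

Lemma matchable_trace (P C : pred nat) : (forall t, on_cycle (7 + t) = P t) ->
  matchable_off k C -> all (fun x => on_cycle x == C x) (iota 0 7) ->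
  (forall t, t <= 2 * k -> C (7 + t) = P t) -> matchable_off k on_cycle.
Proof.
move=> trace MC /allP small path; apply: matchable_off_eq MC => x xN.
have [x7|x7] := ltnP x 7; first by apply/eqP/small; rewrite mem_iota.
by rewrite -(subnKC x7) trace path //; lia.
Qed.

Section PathTrace.
Variables i j : nat.
Hypotheses (i_even : ~~ odd i) (j_even : ~~ odd j) (ij : i <= j) (jk : j <= 2 * k).
Hypothesis trace : forall t, on_cycle (7 + t) = (i <= t <= j).

Lemma interior_no_spoke t : i < t < j -> ~~ cadj 6 (7 + t).
Proof.
move=> itj; apply/negP => hub_t.
have [t_odd|t_even] := boolP (odd t).
  by move: (cadj_hexa hub_t); rewrite hexa_adj_sym => /path_nbr; lia.
have [t_prev t_next] : cadj (7 + t) (6 + t) /\ cadj (7 + t) (8 + t).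
  have [prev_odd next_odd] : odd t.-1 /\ odd t.+1 by clear -t_even itj; lia.
  have [prevC nextC] : on_cycle (7 + t.-1) /\ on_cycle (7 + t.+1) by rewrite !trace; clear -itj; lia.
  have e1 : 7 + t.-1 = 6 + t by clear -itj; lia.
  have e2 : 8 + t.-1 = 7 + t by clear -itj; lia.
  move: (odd_path_cadj prev_odd prevC) (odd_path_cadj next_odd nextC).
  by rewrite e1 e2 !addnS -!addSn => -[_ p] [n _]; rewrite cadj_sym p cadj_sym n.
have t6 : cadj (7 + t) 6 by rewrite cadj_sym.
by case: (cadj_third t_prev t_next _ t6); rewrite ?eqn_add2r //; clear -itj; lia.
Qed.

Lemma hub_cadj y : cadj 6 y -> y = 3 \/ y = 4 \/ y = 7 + i \/ y = 7 + j.
Proof.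
move=> hub_y; case: (hub_nbr (cadj_hexa hub_y)) => [|[|[y7 _]]]; auto.
have /andP [_] := cadj_on hub_y; rewrite -(subnKC y7) trace => /andP [iy yj].
by have := interior_no_spoke (t := y - 7); rewrite subnKC // hub_y; lia.
Qed.

Lemma start_nbr y : cadj (7 + i) y ->
  y = 6 \/ (y = 0 /\ i = 0) \/ (y = 1 /\ i = 2 * k) \/ (y = 8 + i /\ i < j).
Proof.
move=> iy; have /andP [_ yC] := cadj_on iy.
case: (path_nbr (cadj_hexa iy)) => [y_next|[[y_prev i_pos]|]]; last by lia.
  by move: yC; rewrite y_next (_ : 8 + i = 7 + i.+1) // trace; lia.
by move: yC; rewrite y_prev (_ : 6 + i = 7 + i.-1) ?trace; lia.
Qed.

Lemma end_nbr y : cadj (7 + j) y ->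
  y = 6 \/ (y = 0 /\ j = 0) \/ (y = 1 /\ j = 2 * k) \/ (y = 6 + j /\ i < j).
Proof.
move=> jy; have /andP [_ yC] := cadj_on jy.
case: (path_nbr (cadj_hexa jy)) => [y_next|[[y_prev j_pos]|]]; last by lia.
  by move: yC; rewrite y_next (_ : 8 + j = 7 + j.+1) // trace; lia.
by move: yC; rewrite y_prev (_ : 6 + j = 7 + j.-1) ?trace; lia.
Qed.

Lemma start_exit : cadj (7 + i) 6 \/ (i = 0 /\ cadj 0 7).
Proof.
have iC : on_cycle (7 + i) by rewrite trace leqnn.
have [y iy y_next] := cadj_other (8 + i) iC.
case: (start_nbr iy) => [y6|[[y0 i0]|[[y1 ik]|[y8 _]]]]; [by left; rewrite y6 in iy | | | by rewrite y8 eqxx in y_next].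
  by right; split => //; rewrite y0 i0 addn0 cadj_sym in iy.
have [y' iy' y'1] := cadj_other 1 iC.
case: (start_nbr iy') => [y6|[[y'0 i0]|[[y'1' _]|[_ ij']]]]; [by left; rewrite y6 in iy' | | | by lia].
  by right; split => //; rewrite y'0 i0 addn0 cadj_sym in iy'.
by rewrite y'1' eqxx in y'1.
Qed.

Lemma end_exit : cadj (7 + j) 6 \/ (j = 2 * k /\ cadj 1 (7 + 2 * k)).
Proof.
have jC : on_cycle (7 + j) by rewrite trace leqnn ij.
have [y jy y_prev] := cadj_other (6 + j) jC.
case: (end_nbr jy) => [y6|[[y0 j0]|[[y1 jk']|[y6' _]]]]; [by left; rewrite y6 in jy | | | by rewrite y6' eqxx in y_prev].
  have [y' jy' y'0] := cadj_other 0 jC.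
  case: (end_nbr jy') => [y6|[[y'0' _]|[[y'1 jk']|[_ ij']]]]; [by left; rewrite y6 in jy' | | | by lia].
    by rewrite y'0' eqxx in y'0.
  by right; split => //; rewrite y'1 jk' cadj_sym in jy'.
by right; split => //; rewrite y1 jk' cadj_sym in jy.
Qed.



Lemma trace_both_ends : cadj 0 7 -> cadj 1 (7 + 2 * k) -> matchable_off k on_cycle.
Proof.
move=> a0u1 a1v1; have hub3 : cadj 6 3 by rewrite a3_hub_parity.
have hub4 : cadj 6 4 by rewrite a4_hub_parity.
have hub_only y : cadj 6 y -> y = 3 \/ y = 4 := cadj_third hub3 hub4 isT.
have [/andP [C0 C7] /andP [C1 Cv1]] := (cadj_on a0u1, cadj_on a1v1).
have [/andP [C6 C3] /andP [_ C4]] := (cadj_on hub3, cadj_on hub4).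
have a05 : cadj 0 5.
  have [y a0y y7] := cadj_other 7 C0.
  case: (a0_nbr (cadj_hexa a0y)) => [y1|[<- //|y7']]; last by rewrite y7' eqxx in y7.
  rewrite {}y1 {y7} in a0y; exfalso.
  have [z [w [zw /orP [z1|z7] /norP [/negbTE w2 /negbTE w6]]]] :=
    cycle_crossing_nat (P := fun x => (x <= 1) || (7 <= x)) C0 C6 isT isT.
  - have [z0|z1'] : z = 0 \/ z = 1 by clear -z1; lia.
      by move: zw; rewrite z0 => /(cadj_third a0u1 a0y isT); clear -w2 w6; lia.
    have a10 : cadj 1 0 by rewrite cadj_sym.
    have ne : 7 + 2 * k != 0 by rewrite addn_eq0.
    by move: zw; rewrite z1' => /(cadj_third a1v1 a10 ne); clear -w2 w6; lia.
  - have := @path_nbr k (z - 7) w; rewrite subnKC // => /(_ (cadj_hexa zw)) w_nbr.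
    have w_hub : w = 6 by clear -w_nbr w2 w6; lia.
    by move: zw; rewrite w_hub cadj_sym => /hub_only; clear -z7; lia.
have a12 : cadj 1 2.
  have [y a1y yv1] := cadj_other (7 + 2 * k) C1.
  case: (a1_nbr (cadj_hexa a1y)) => [y0|[<- //|yv1']]; last by rewrite yv1' eqxx in yv1.
  by move: a1y; rewrite y0 cadj_sym => /(cadj_third a0u1 a05 isT); clear; lia.
have /andP [_ C2] := cadj_on a12; have /andP [_ C5] := cadj_on a05.
apply: (matchable_trace trace (matchable_all k)); first by rewrite /= C0 C1 C2 C3 C4 C5 C6.
move: C7 Cv1; rewrite -[7]addn0 !trace; clear; lia.
Qed.

Lemma trace_no_end : ~~ cadj 0 7 -> ~~ cadj 1 (7 + 2 * k) -> matchable_off k on_cycle.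
Proof.
move=> a0u1 a1v1; have hub3 : ~~ cadj 6 3 by rewrite a3_hub_parity.
have hub4 : ~~ cadj 6 4 by rewrite a4_hub_parity.
have hub_i : cadj (7 + i) 6 by case: start_exit => // -[_ a0u1']; rewrite a0u1' in a0u1.
have hub_j : cadj (7 + j) 6 by case: end_exit => // -[_ a1v1']; rewrite a1v1' in a1v1.
have /andP [_ C6] := cadj_on hub_i.
have off_hexagon x : x < 6 -> on_cycle x = false.
  move=> x6; apply/negbTE/negP => xC.
  have [|z [w [zw z6 w6]]] := cycle_crossing_nat (P := fun x => 6 <= x) C6 xC (leqnn 6).
    by rewrite -ltnNge.
  rewrite /= -ltnNge in w6; have [z_hub|z_path] := eqVneq z 6.
    move: (zw); rewrite z_hub => /hub_cadj [w3|[w4|]]; last by clear -w6; lia.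
    - by move: zw; rewrite z_hub w3 (negbTE hub3).
    - by move: zw; rewrite z_hub w4 (negbTE hub4).
  have z7 : 7 <= z by clear -z6 z_path; lia.
  have := @path_nbr k (z - 7) w; rewrite subnKC // => /(_ (cadj_hexa zw)).
  case=> [|[|[|[[w0 z7']|[w1 zk]]]]]; try by clear -w6 z7; lia.
  - have z_u1 : z = 7 by clear -z7 z7'; lia.
    by move: zw; rewrite z_u1 w0 cadj_sym (negbTE a0u1).
  - have z_v1 : z = 7 + 2 * k by clear -z7 zk; lia.
    by move: zw; rewrite z_v1 w1 cadj_sym (negbTE a1v1).
apply: (matchable_trace trace (matchable_hub_path i_even j_even _)); first by rewrite ij.
- by rewrite /= C6 !off_hexagon.
- by move=> t _; rewrite /=; clear; lia.
Qed.

Lemma trace_start_end : cadj 0 7 -> ~~ cadj 1 (7 + 2 * k) -> matchable_off k on_cycle.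
Proof.
move=> a0u1 a1v1; have hub3 : cadj 6 3 by rewrite a3_hub_parity.
have hub4 : ~~ cadj 6 4 by rewrite a4_hub_parity.
have [/andP [C0 C7] /andP [C6 C3]] := (cadj_on a0u1, cadj_on hub3).
have i0 : i = 0 by move: C7; rewrite -[7]addn0 trace; clear; lia.
have [y a0y y7] := cadj_other 7 C0.
case: (a0_nbr (cadj_hexa a0y)) => [y1|[y5|y7']]; last by rewrite y7' eqxx in y7.
- rewrite {}y1 {y7} in a0y.
  have a12 : cadj 1 2.
    have [y' a1y' y'0] := cadj_other 0 (proj2 (andP (cadj_on a0y))).
    case: (a1_nbr (cadj_hexa a1y')) => [y'0'|[<- //|y'v1]]; first by rewrite y'0' eqxx in y'0.
    by rewrite y'v1 in a1y'; rewrite a1y' in a1v1.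
  have C5 : on_cycle 5 = false.
    apply/negbTE/negP => C5; have [_ a50] := cadj_forced C5 (isT : 4 != 0) (fun y y5 _ => a5_nbr y5).
    by move: a50; rewrite cadj_sym => /(cadj_third a0u1 a0y isT); clear; lia.
  have C4 : on_cycle 4 = false.
    apply/negbTE; apply: (lonely_off (a := 3)) => y' a4y'.
    case: (a4_nbr (cadj_hexa a4y')) => [//|[y'5|y'6]].
    + by move: a4y' => /cadj_on /andP [_]; rewrite y'5 C5.
    + by move: a4y'; rewrite y'6 cadj_sym (negbTE hub4).
  have /andP [C1 C2] := cadj_on a12.
  apply: (matchable_trace trace (matchable_arc03 j_even jk)).
  + by rewrite /= C0 C1 C2 C3 C4 C5 C6.
  + by move=> t _; rewrite /= i0; clear; lia.
- rewrite {}y5 {y7} in a0y.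
  have [a54 _] := cadj_forced (proj2 (andP (cadj_on a0y))) (isT : 4 != 0) (fun y y5 _ => a5_nbr y5).
  have C1 : on_cycle 1 = false.
    apply/negbTE; apply: (lonely_off (a := 2)) => y' a1y'.
    case: (a1_nbr (cadj_hexa a1y')) => [y'0|[//|y'v1]].
    + by move: a1y'; rewrite y'0 cadj_sym => /(cadj_third a0u1 a0y isT); clear; lia.
    + by rewrite y'v1 in a1y'; rewrite a1y' in a1v1.
  have C2 : on_cycle 2 = false.
    apply/negbTE/negP => C2; have [a21 _] := cadj_forced C2 (isT : 1 != 3) (fun y y2 _ => a2_nbr y2).
    by have /andP [_] := cadj_on a21; rewrite C1.
  have /andP [C5 C4] := cadj_on a54.
  apply: (matchable_trace trace (matchable_arc30 j_even jk)).
  + by rewrite /= C0 C1 C2 C3 C4 C5 C6.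
  + by move=> t _; rewrite /= i0; clear; lia.
Qed.

Lemma trace_end_start : ~~ cadj 0 7 -> cadj 1 (7 + 2 * k) -> matchable_off k on_cycle.
Proof.
move=> a0u1 a1v1; have hub3 : ~~ cadj 6 3 by rewrite a3_hub_parity.
have hub4 : cadj 6 4 by rewrite a4_hub_parity.
have [/andP [C1 Cv1] /andP [C6 C4]] := (cadj_on a1v1, cadj_on hub4).
have j2k : j = 2 * k by move: Cv1; rewrite trace; clear -jk; lia.
have [y a1y yv1] := cadj_other (7 + 2 * k) C1.
case: (a1_nbr (cadj_hexa a1y)) => [y0|[y2|yv1']]; last by rewrite yv1' eqxx in yv1.
- rewrite {}y0 {yv1} in a1y; have C0 := proj2 (andP (cadj_on a1y)).
  have a05 : cadj 0 5.
    have [y' a0y' y'1] := cadj_other 1 C0.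
    case: (a0_nbr (cadj_hexa a0y')) => [y'1'|[<- //|y'7]]; first by rewrite y'1' eqxx in y'1.
    by rewrite y'7 in a0y'; rewrite a0y' in a0u1.
  have [a54 _] := cadj_forced (proj2 (andP (cadj_on a05))) (isT : 4 != 0) (fun y y5 _ => a5_nbr y5).
  have C3 : on_cycle 3 = false.
    apply/negbTE; apply: (lonely_off (a := 2)) => y' a3y'.
    case: (a3_nbr (cadj_hexa a3y')) => [//|[y'4|y'6]].
    + rewrite y'4 cadj_sym in a3y'; rewrite cadj_sym in a54.
      by have := cadj_third (etrans (cadj_sym _ _) hub4) a54 isT a3y'; clear; lia.
    + by move: a3y'; rewrite y'6 cadj_sym (negbTE hub3).
  have C2 : on_cycle 2 = false.
    apply/negbTE/negP => C2; have [_ a23] := cadj_forced C2 (isT : 1 != 3) (fun y y2 _ => a2_nbr y2).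
    by have /andP [_] := cadj_on a23; rewrite C3.
  have /andP [C5 _] := cadj_on a54.
  apply: (matchable_trace trace (matchable_arc41 i_even (leq_trans ij jk))).
  + by rewrite /= C0 C1 C2 C3 C4 C5 C6.
  + by move=> t tk; rewrite /= j2k; clear -tk; lia.
- rewrite {}y2 {yv1} in a1y.
  have [_ a23] := cadj_forced (proj2 (andP (cadj_on a1y))) (isT : 1 != 3) (fun y y2 _ => a2_nbr y2).
  have C0 : on_cycle 0 = false.
    apply/negbTE; apply: (lonely_off (a := 5)) => y' a0y'.
    case: (a0_nbr (cadj_hexa a0y')) => [y'1|[//|y'7]].
    + by move: a0y'; rewrite y'1 cadj_sym => /(cadj_third a1v1 a1y); clear; lia.
    + by rewrite y'7 in a0y'; rewrite a0y' in a0u1.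
  have C5 : on_cycle 5 = false.
    apply/negbTE/negP => C5; have [_ a50] := cadj_forced C5 (isT : 4 != 0) (fun y y5 _ => a5_nbr y5).
    by have /andP [_] := cadj_on a50; rewrite C0.
  have /andP [C2 C3] := cadj_on a23.
  apply: (matchable_trace trace (matchable_arc14 i_even (leq_trans ij jk))).
  + by rewrite /= C0 C1 C2 C3 C4 C5 C6.
  + by move=> t tk; rewrite /= j2k; clear -tk; lia.
Qed.

End PathTrace.

Lemma no_path_trace : (forall t, ~~ on_cycle (7 + t)) -> matchable_off k on_cycle.
Proof.
move=> no_path; have path_off x : 7 <= x -> on_cycle x = false.
  by move=> x7; rewrite -(subnKC x7); apply/negbTE.
have a0u1 : ~~ cadj 0 7 by apply/negP => /cadj_on /andP [_]; rewrite path_off.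
have a1v1 : ~~ cadj 1 (7 + 2 * k) by apply/negP => /cadj_on /andP [_]; rewrite path_off // leq_addr.
have hub3 : ~~ cadj 6 3 by rewrite a3_hub_parity.
have hub4 : ~~ cadj 6 4 by rewrite a4_hub_parity.
have C6 : on_cycle 6 = false.
  apply/negbTE/negP => /(cadj_other 0) [y hub_y _].
  case: (hub_nbr (cadj_hexa hub_y)) => [y3|[y4|[y7 _]]].
  - by rewrite y3 (negbTE hub3) in hub_y.
  - by rewrite y4 (negbTE hub4) in hub_y.
  - by have /andP [_] := cadj_on hub_y; rewrite path_off.
have forced x a b : (forall y, hexa_adj x y -> on_cycle y -> y = a \/ y = b) -> a != b ->
    on_cycle x -> on_cycle a && on_cycle b.
  by move=> nbr ab xC; apply: on_cycle_forced nbr.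
have off y : 6 <= y -> on_cycle y = false.
  by rewrite leq_eqVlt => /orP [/eqP <- //|]; apply: path_off.
have h0 : on_cycle 0 -> on_cycle 1 && on_cycle 5.
  by apply: forced => // y /a0_nbr [-> _|[-> _|->]]; [left|right|rewrite off].
have h1 : on_cycle 1 -> on_cycle 0 && on_cycle 2.
  by apply: forced => // y /a1_nbr [-> _|[-> _|->]]; [left|right|rewrite off ?leq_addr].
have h2 : on_cycle 2 -> on_cycle 1 && on_cycle 3.
  by apply: forced => // y /a2_nbr [-> _|-> _]; [left|right].
have h3 : on_cycle 3 -> on_cycle 2 && on_cycle 4.
  by apply: forced => // y /a3_nbr [-> _|[-> _|->]]; [left|right|rewrite C6].
have h4 : on_cycle 4 -> on_cycle 3 && on_cycle 5.
  by apply: forced => // y /a4_nbr [-> _|[-> _|->]]; [left|right|rewrite C6].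
have h5 : on_cycle 5 -> on_cycle 4 && on_cycle 0.
  by apply: forced => // y /a5_nbr [-> _|-> _]; [left|right].
have [z z6 zC] : exists2 z, z < 6 & on_cycle z.
  case def_s: s s_size => [|z s'] // _.
  have zC : on_cycle z by rewrite on_cycleE def_s mem_head.
  by exists z => //; rewrite ltnNge; apply: contraTN zC => /off ->.
have no_trace t : on_cycle (7 + t) = false by apply/negbTE.
apply: (matchable_trace no_trace (matchable_hexagon k)).
- have down x : on_cycle x.+1 -> x < 4 -> on_cycle x.
    move=> xC; case: x xC => [/h1|[/h2|[/h3|[/h4|]]]] //; by case/andP.
  have C0 : on_cycle 0.
    have [z5|z5] := ltnP z 5; last first.
      have z_a5 : z = 5 by clear -z5 z6; lia.
      by move: zC; rewrite z_a5 => /h5 /andP [].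
    elim: z zC {z6} z5 => // z IHz zC z5.
    by apply: IHz; [apply: down | clear -z5; lia].
  have /andP [C1 C5] := h0 C0; have /andP [_ C2] := h1 C1.
  have /andP [_ C3] := h2 C2; have /andP [_ C4] := h3 C3.
  by rewrite /= C0 C1 C2 C3 C4 C5 C6.
- by move=> t _; rewrite /=; clear; lia.
Qed.



Lemma cycle_complement_matchable : matchable_off k on_cycle.
Proof.
have [[t tC]|no_path] : (exists t, on_cycle (7 + t)) \/ (forall t, ~~ on_cycle (7 + t)).
  have [[t tC]|none] := pickP (fun t : 'I_N => on_cycle (7 + t)); first by left; exists t.
  right => t; have [tN|tN] := ltnP t N; first by rewrite (none (Ordinal tN)).
  by apply: contraTN tN => /on_cycle_lt; rewrite -ltnNge; clear; lia.
- have [i [j [i_even j_even /andP [ij jk] trace]]] := path_trace tC.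
  have [a0u1|a0u1] := boolP (cadj 0 7); have [a1v1|a1v1] := boolP (cadj 1 (7 + 2 * k)).
  + exact: trace_both_ends trace a0u1 a1v1.
  + by apply: (trace_start_end (i := i) (j := j)).
  + by apply: (trace_end_start (i := i) (j := j)).
  + by apply: (trace_no_end (i := i) (j := j)).
- exact: no_path_trace.
Qed.

End HexaCycle.

Lemma hexa_even_cycle_matching k (s : seq 'I_(2 * k + 8)) : even_cycle (@hexa k) s ->
  exists m, matching_map_on (@hexa k) (~: [set x in s]) m.
Proof.
case/and4P => s_uniq s_size s_cycle s_even.
have [F FM] := cycle_complement_matchable s_uniq s_size s_cycle s_even.
exists (fun x : 'I_(2 * k + 8) => vtx k (F x)).
have -> : ~: [set x in s] = [set x : 'I_(2 * k + 8) | ~~ on_cycle s x].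
  by apply/setP => x; rewrite !inE on_cycleE.
exact: matching_map_of_fun FM.
Qed.

Theorem proposition5p15 (T : finType) (e : rel T) :
  in_G3 e -> cycle_extendable e.
Proof.
case=> k [f [[g fK gK] f_hom]].
apply: (cycle_extendable_iso fK gK f_hom).
- by rewrite card_ord !addnS.
- exact: hexa_connected.
- exact: hexa_edge_in_matching.
- exact: hexa_even_cycle_matching.
Qed.
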